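(* Let $m \ge 1$ be odd, $n\ge1$ with $\gcd(m,4n)=1$, and $r \in \mathbb{Z}$ with $r^{4n}\equiv 1 \bmod m$. Let $G = \langle u,v \mid u^m = v^{4n} = 1,\ vuv^{-1} = u^r\rangle$. Then for $a \ge 2$, $G$ has a quotient isomorphic to $Q_{4a}$ if and only if $a \mid m$ and $r \equiv -1 \bmod a$.
   Context: $Q_{4a} = \langle x,y\mid x^a=y^2, yxy^{-1}=x^{-1}\rangle$ is the generalised quaternion group of order $4a$. *)

From mathcomp Require Import all_boot all_order all_algebra all_fingroup.
Set Implicit Arguments. Unset Strict Implicit. Unset Printing Implicit Defensive.
Import GRing.Theory.
Local Open Scope group_scope.

(* Q \is_Q4 a : Q is isomorphic to the generalised quaternion group
   Q_{4a} = < x, y | x^a = y^2, y x y^-1 = x^-1 >.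
   (In MathComp, x ^ g = g^-1 x g, so y x y^-1 = x ^ y^-1.) *)
Definition is_Q4 (a : nat) (gT : finGroupType) (Q : {group gT}) : Prop :=
  Q \isog Grp (x : y : (x ^+ a = y ^+ 2, x ^ y^-1 = x^-1)).

(* Q is a homomorphic image (quotient) of
   G = < u, v | u^m = v^(4n) = 1, v u v^-1 = u^r >, with r an integer:
   u^r is u^+k for r = k >= 0 and u^-(k+1) for r = -(k+1). *)
Definition is_quot_G (m n : nat) (r : int) (gT : finGroupType) (Q : {set gT}) : bool :=
  match r with
  | Posz k => Q \homg Grp (u : v : (u ^+ m, v ^+ (4 * n), u ^ v^-1 = u ^+ k))
  | Negz k => Q \homg Grp (u : v : (u ^+ m, v ^+ (4 * n), u ^ v^-1 = u ^- k.+1))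
  end.

(* Since y^2 = x^a is central of order 2 in Q_4a, the quotient Q_4a/<y^2> is
   the dihedral group D_2a.  If Q_4a is a quotient of G, then so is D_2a, and
   the image of u, having odd order, is a rotation; as the images of u and v
   generate D_2a, u generates the whole rotation subgroup (so a | m) and v is
   a reflection, which inverts u, so that u^r = u^-1 forces r = -1 (mod a).
   Conversely, for odd a the group Q_4a is the semidirect product of Z_a by
   Z_4 acting through inversion (take x y^2 and y as its generators), and the
   generators of Z_a and Z_4 satisfy the relations of G when a | m and
   r = -1 (mod a). *)

From mathcomp Require Import all_boot all_order all_algebra all_fingroup.
From mathcomp Require Import cyclic extremal zify.
Import GRing.Theory.
Set Implicit Arguments.
Unset Strict Implicit.
Unset Printing Implicit Defensive.
Local Open Scope group_scope.

Section Inverting.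

Variables (gT : finGroupType) (x y : gT).
Hypothesis xy : x ^ y = x^-1.

Lemma conjgV_inverting : x ^ y^-1 = x^-1.
Proof. by rewrite -{1}[x]invgK conjVg -xy conjgK. Qed.

Lemma conjX_inverting i : x ^+ i ^ y = x ^- i.
Proof. by rewrite conjXg xy expgVn. Qed.

Lemma commute_inverting_sqr : commute x (y ^+ 2).
Proof.
by apply/commgP/conjg_fixP; rewrite expgS expg1 conjgM xy conjVg xy invgK.
Qed.

End Inverting.

Section CyclicJoins.

Variable gT : finGroupType.
Implicit Types x y : gT.

Lemma mem_joing_cyclel x y : x \in <[x]> <*> <[y]>.
Proof. by rewrite -cycle_subG joing_subl. Qed.

Lemma mem_joing_cycler x y : y \in <[x]> <*> <[y]>.
Proof. by rewrite -cycle_subG joing_subr. Qed.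

Lemma joing_cycle_mulXr x y k : <[x * y ^+ k]> <*> <[y]> = <[x]> <*> <[y]>.
Proof.
apply/eqP; rewrite eqEsubset !join_subG !cycle_subG !mem_joing_cycler !andbT.
rewrite groupM ?groupX ?mem_joing_cyclel ?mem_joing_cycler //=.
rewrite -[x in x \in _](mulgK (y ^+ k)).
by rewrite groupM ?groupV ?groupX ?mem_joing_cyclel ?mem_joing_cycler.
Qed.

Lemma joing_cycle_sqr x y k :
  odd k -> x ^+ k \in <[y]> -> <[x ^+ 2]> <*> <[y]> = <[x]> <*> <[y]>.
Proof.
move=> odd_k xk_y; apply/eqP.
rewrite eqEsubset !join_subG !cycle_subG !mem_joing_cycler !andbT.
rewrite groupX ?mem_joing_cyclel //=.
have def_x : x = (x ^+ 2) ^+ k.+1./2 * (x ^+ k)^-1.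
  have half_k1 : (k.+1)./2.*2 = k.+1 by rewrite -[RHS]odd_double_half /= odd_k.
  by rewrite -expgM mul2n half_k1 expgS mulgK.
rewrite [x in x \in _]def_x; apply: groupM.
  by rewrite groupX ?mem_joing_cyclel.
by rewrite groupV mem_gen // inE xk_y orbT.
Qed.

End CyclicJoins.

Lemma card_joing_cycle_le (gT : finGroupType) (u v : gT) :
  <[v]> \subset 'N(<[u]>) -> #|<[u]> <*> <[v]>| <= #[u] * #[v].
Proof.
by move=> nUV; rewrite norm_joinEr // !orderE mul_cardG leq_pmulr ?cardG_gt0.
Qed.

Definition expgz (gT : finGroupType) (x : gT) (r : int) : gT :=
  match r with Posz k => x ^+ k | Negz k => x ^- k.+1 end.

Lemma expgz_eq_inv (gT : finGroupType) (x : gT) (r : int) :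
  (expgz x r = x^-1) <-> (#[x]%:Z %| (r + 1)%R)%Z.
Proof.
case: r => k /=; apply: iff_trans (rwP eqP) _.
  have -> : (#[x]%:Z %| (k%:Z + 1)%R)%Z = (#[x] %| k.+1).
    by rewrite dvdzE; congr (_ %| _); lia.
  by rewrite order_dvdn expgS -eq_invg_mul eq_sym.
have -> : (#[x]%:Z %| (Negz k + 1)%R)%Z = (#[x] %| k).
  by rewrite dvdzE; congr (_ %| _); lia.
by rewrite order_dvdn (inj_eq invg_inj) expgS -{3}[x]mulg1 (inj_eq (mulgI x)).
Qed.

Lemma homg_Grp_ext_dihedral_Q4 (a : nat) (rT : finGroupType) (H : {set rT}) :
  odd a ->
  (H \homg Grp (x : y : (x ^+ a, y ^+ 4, x ^ y = x^-1)))
  = (H \homg Grp (x : y : (x ^+ a = y ^+ 2, x ^ y^-1 = x^-1))).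
Proof.
move=> odd_a; have fixV (z : rT) k : z ^+ k ^ z^-1 = z ^+ k.
  by apply/conjg_fixP/commgP/commuteV/commute_sym/commuteX.
apply/existsP/existsP => -[[x y]] /= /eqP[defH].
- move=> xa y4 xy; exists (x * y ^+ 2, y).
  rewrite /= !xpair_eqE joing_cycle_mulXr defH eqxx /=.
  have cxy2 := commute_inverting_sqr xy.
  have y2V : (y ^+ 2)^-1 = y ^+ 2 by apply/eqP; rewrite eq_invg_mul -expgD y4.
  have y22 : (y ^+ 2) ^+ 2 = 1 by rewrite -expgM.
  apply/andP; split; apply/eqP.
  + by rewrite expgMn // xa mul1g -(expg_mod _ y22) modn2 odd_a.
  rewrite conjMg conjgV_inverting // fixV invMg y2V.
  exact: commute_sym (commuteV (commute_sym cxy2)).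
- move=> xay2 xyV; have xy : x ^ y = x^-1 by rewrite -[y]invgK conjgV_inverting.
  have x2a : x ^+ (2 * a) = 1.
    have xVa : x ^- a = x ^+ a by rewrite -(conjX_inverting xyV) xay2 fixV.
    by rewrite mul2n -addnn expgD -{1}xVa mulVg.
  exists (x ^+ 2, y).
  rewrite /= !xpair_eqE (joing_cycle_sqr odd_a) ?xay2 ?mem_cycle //.
  rewrite defH eqxx -expgM x2a eqxx /= conjX_inverting // eqxx andbT.
  by rewrite -[4]/(2 * 2)%N expgM -xay2 -expgM mulnC x2a.
Qed.

Lemma is_Q4_ext_dihedral (a : nat) :
  1 < a -> odd a -> is_Q4 a [set: Extremal.gtype a 4 a.-1]%G.
Proof.
move=> a_gt1 odd_a rT H; rewrite (@Grp_ext_dihedral a a_gt1 4) //.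
exact: homg_Grp_ext_dihedral_Q4.
Qed.

Lemma dihedral_homg_Q4 (a : nat) (gT : finGroupType) (Q : {group gT}) :
  1 < a -> is_Q4 a Q -> 'D_(a.*2) \homg Q.
Proof.
move=> a_gt1 isoQ; rewrite (isoQ _ 'D_(a.*2)%G).
have /isoGrp_hom/existsP[[x y] /eqP[defD xa y2 xy]] := Grp_dihedral a_gt1.
apply/existsP; exists (x, y).
by rewrite /= !xpair_eqE defD xa y2 conjgV_inverting // !eqxx.
Qed.

Section DihedralGenerators.

Variables (gT : finGroupType) (a : nat) (x y : gT).
Hypotheses (xa : x ^+ a = 1) (y2 : y ^+ 2 = 1) (xy : x ^ y = x^-1).

Lemma dihedral_reflection z :
  z \in <[x]> <*> <[y]> -> z \notin <[x]> -> z ^+ 2 = 1 /\ x ^ z = x^-1.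
Proof.
have nXY : <[y]> \subset 'N(<[x]>) by rewrite norms_cycle xy groupV cycle_id.
rewrite norm_joinEr // => /mulsgP[_ _ /cycleP[i ->] /cycleP[j ->] ->].
rewrite -(expg_mod _ y2) modn2.
case: (odd j) => /=; last by rewrite mulg1 mem_cycle.
move=> _; rewrite expg1; split.
  rewrite expgS expg1 {2}(conjgC (x ^+ i)) conjX_inverting //.
  by rewrite mulgA -(mulgA _ y y) -[y * y]/(y ^+ 2) y2 mulg1 mulgV.
have fix_x : x ^ x ^+ i = x by apply/conjg_fixP/commgP/commuteX.
by rewrite conjgM fix_x.
Qed.

Lemma dihedral_odd_order_rotation z :
  z \in <[x]> <*> <[y]> -> odd #[z] -> z \in <[x]>.
Proof.
move=> Hz odd_z; apply: contraT => zX.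
have [z2 _] := dihedral_reflection Hz zX.
have cop : coprime #[z] 2 by rewrite coprimen2.
have : #[z] %| gcdn #[z] 2 by rewrite dvdn_gcd dvdnn order_dvdn z2 eqxx.
rewrite (eqnP cop) dvdn1 order_eq1 => /eqP z1.
by move: zX; rewrite z1 group1.
Qed.

Lemma dihedral_odd_generators u v :
  #|<[x]> <*> <[y]>| = a.*2 -> <[u]> <*> <[v]> = <[x]> <*> <[y]> -> odd #[u] ->
  #[u] = a /\ u ^ v = u^-1.
Proof.
move=> oH defUV odd_u.
have a_gt0 : 0 < a by rewrite -double_gt0 -oH cardG_gt0.
have ox : #[x] %| a by rewrite order_dvdn xa.
have uX : u \in <[x]>.
  by apply: dihedral_odd_order_rotation odd_u; rewrite -defUV mem_joing_cyclel.
have vX : v \notin <[x]>.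
  apply/negP => vX; have : #|<[x]> <*> <[y]>| <= #[x].
    by rewrite orderE subset_leq_card // -defUV join_subG !cycle_subG uX vX.
  rewrite oH; have := dvdn_leq a_gt0 ox; lia.
have Hv : v \in <[x]> <*> <[y]> by rewrite -defUV mem_joing_cycler.
have [v2 xv] := dihedral_reflection Hv vX.
have uv : u ^ v = u^-1 by case/cycleP: uX => i ->; apply: conjX_inverting.
split=> //.
have nUV : <[v]> \subset 'N(<[u]>) by rewrite norms_cycle uv groupV cycle_id.
have le_uv := card_joing_cycle_le nUV; rewrite defUV oH in le_uv.
have ov : #[v] <= 2 by rewrite dvdn_leq // order_dvdn v2.
have ou : #[u] <= a.
  by rewrite dvdn_leq // (dvdn_trans (order_dvdG uX)) // -orderE.
have := leq_mul (leqnn #[u]) ov; lia.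
Qed.

End DihedralGenerators.

Lemma is_quot_GP (m n : nat) (r : int) (gT : finGroupType) (Q : {set gT}) :
  reflect (exists u v : gT, [/\ <[u]> <*> <[v]> = Q, u ^+ m = 1,
                               v ^+ (4 * n) = 1 & u ^ v^-1 = expgz u r])
          (is_quot_G m n r Q).
Proof.
case: r => k; apply: (iffP existsP) => [[[u v]] /eqP[] | [u [v]]];
  by [exists u, v | case=> defQ um vn uv; exists (u, v);
                    rewrite /= !xpair_eqE defQ um vn uv !eqxx].
Qed.

Lemma homg_is_quot_G (m n : nat) (r : int) (rT gT : finGroupType)
    (K : {set rT}) (Q : {group gT}) :
  K \homg Q -> is_quot_G m n r Q -> is_quot_G m n r K.
Proof. by case: r => k; apply: homGrp_trans. Qed.

Theorem lemma1p6 (m n : nat) (r : int) :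
  odd m -> (0 < n)%N -> coprime m (4 * n) ->
  (r ^+ (4 * n) = 1 %[mod m%:Z])%Z ->
  forall a : nat, (2 <= a)%N ->
  ((exists (gT : finGroupType) (Q : {group gT}), is_Q4 a Q /\ is_quot_G m n r Q)
   <-> ((a %| m)%N /\ (r = -1 %[mod a%:Z])%Z)).
Proof.
(* The conditions on n and r only make G well defined. *)
move=> odd_m _ _ _ a a_gt1; split.
- case=> gT [Q [isoQ quotQ]].
  have /is_quot_GP[u [v [defUV um _ uv]]] :=
    homg_is_quot_G (dihedral_homg_Q4 a_gt1 isoQ) quotQ.
  have /isoGrp_hom/existsP[[x y] /eqP[defD xa y2 xy]] := Grp_dihedral a_gt1.
  have oD : #|<[x]> <*> <[y]>| = a.*2 by rewrite defD card_dihedral.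
  have odd_u : odd #[u] by apply: dvdn_odd odd_m; rewrite order_dvdn um.
  have defUD : <[u]> <*> <[v]> = <[x]> <*> <[y]> by rewrite defUV defD.
  have [ou uvV] := dihedral_odd_generators xa y2 xy oD defUD odd_u.
  split; first by rewrite -ou order_dvdn um.
  apply/eqP; rewrite eqz_mod_dvd opprK -ou; apply/expgz_eq_inv.
  by rewrite -uv (conjgV_inverting uvV).
- case=> dvd_am r_mod; have odd_a := dvdn_odd dvd_am odd_m.
  exists _, [set: Extremal.gtype a 4 a.-1]%G.
  split; first exact: is_Q4_ext_dihedral.
  have /isoGrp_hom/existsP[[u v] /eqP[defE ua v4 uv]] :=
    @Grp_ext_dihedral a a_gt1 4 isT isT.
  have ou : #[u] %| a by rewrite order_dvdn ua.
  apply/is_quot_GP; exists u, v; split=> //.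
  + by apply/eqP; rewrite -order_dvdn (dvdn_trans ou).
  + by rewrite expgM v4 expg1n.
  rewrite conjgV_inverting //; symmetry; apply/expgz_eq_inv.
  apply: dvdz_trans (_ : a%:Z %| _)%Z; first by rewrite dvdzE.
  by move/eqP: r_mod; rewrite eqz_mod_dvd opprK.
Qed.
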